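(* Let $P$ and $Q$ be $[0,1]$-valued random variables, where under the null hypothesis $H_0$, $P$ is a valid p-value ($\Pr(P\le s)\le s$ for all $s\in[0,1]$) and $Q$ has density $f$ on $[0,1]$. Let $\ell_f := \inf_{q \in [0,1]} f(q)$ and $\eta \in [0,1]$. Let $T\in\{0,1\}$ be such that, conditionally on $(Q,P)$, $T \sim \mathrm{Bern}\big(1 - \eta \ell_f / f(Q)\big)$, and define $$\tilde P^{\mathrm{density}} := T\,P + (1-T)\,Q.$$ Then, under $H_0$, for every $s\in[0,1]$, $$\Pr(\tilde P^{\mathrm{density}} \le s) = \Pr(P \le s) + \eta \ell_f\Big(s - \int_0^1 \Pr(P \le s \mid Q = q)\, dq\Big).$$ Consequently, when $P$ and $Q$ are independent, $\tilde P^{\mathrm{density}}$ is a valid p-value, and it is exactly $\mathrm{Uniform}[0,1]$ if $P$ is exactly $\mathrm{Uniform}[0,1]$, regardless of the distribution of $Q$.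
   Context: $T$ is drawn based on $Q$ using additional independent randomness. $Q$ is a ''proxy'' p-value with no validity assumption; its null density $f$ is assumed known. *)

From mathcomp Require Import all_boot all_order all_algebra.
From mathcomp Require Import all_classical all_reals all_analysis.
Set Implicit Arguments. Unset Strict Implicit. Unset Printing Implicit Defensive.
Import Order.TTheory GRing.Theory Num.Theory.
Local Open Scope classical_set_scope.
Local Open Scope ring_scope.

Section defs.
Context {R : realType} {d : measure_display} {Omega : measurableType d}.

Definition prob_le (Pr : probability Omega R) (X : Omega -> R) (s : R) : \bar R :=
  Pr [set w | X w <= s].

Definition valid_pvalue (Pr : probability Omega R) (X : Omega -> R) : Prop :=
  forall s : R, 0 <= s <= 1 -> (prob_le Pr X s <= s%:E)%E.

(* exactly Uniform[0,1] (X being [0,1]-valued): Pr(X <= s) = s on [0,1] *)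
Definition uniform01 (Pr : probability Omega R) (X : Omega -> R) : Prop :=
  forall s : R, 0 <= s <= 1 -> prob_le Pr X s = s%:E.

Definition indep_rv (Pr : probability Omega R) (X Y : Omega -> R) : Prop :=
  forall A B : set R, measurable A -> measurable B ->
    Pr (X @^-1` A `&` Y @^-1` B) = (Pr (X @^-1` A) * Pr (Y @^-1` B))%E.

Definition ptilde_density (T P Q : Omega -> R) : Omega -> R :=
  fun w => T w * P w + (1 - T w) * Q w.
End defs.

Definition ell_f {R : realType} (f : R -> R) : R :=
  inf [set f q | q in `[0%R, 1%R]].

From mathcomp Require Import all_boot all_order all_algebra.
From mathcomp Require Import all_classical all_reals all_analysis.
From mathcomp Require Import measurable_realfun ring lra.
Import Order.TTheory GRing.Theory Num.Theory.
Local Open Scope classical_set_scope.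
Local Open Scope ring_scope.

(* Write w := eta * ell_f / f(Q); it lies in [0, 1] because ell_f <= f on [0, 1].
   The law of T says Pr(E, T = 1) = E[1 - w; E], hence Pr(E, T = 0) = E[w; E],
   for every event E determined by (Q, P).  Splitting
     {Ptilde <= s} = ({P <= s}, T = 1) + ({Q <= s}, T = 0)
   gives Pr(Ptilde <= s) + E[w; P <= s] = Pr(P <= s) + E[w; Q <= s].
   In both expectations the factor 1 / f(Q) cancels the density of Q:
   E[w; Q <= s] = eta ell_f s, and E[w; P <= s] = eta ell_f int_0^1 Pr(P <= s | Q = q) dq,
   which is eta ell_f Pr(P <= s) when P and Q are independent.  In that case
   Pr(Ptilde <= s) = (1 - eta ell_f) Pr(P <= s) + eta ell_f s, a convex combination
   since eta ell_f = E[w; Q <= 1] <= 1. *)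

Lemma measurable_preimageT {d d'} {T : measurableType d} {U : measurableType d'}
    {X : T -> U} {A : set U} :
  measurable_fun setT X -> measurable A -> measurable (X @^-1` A).
Proof. by move=> mX mA; rewrite -[X @^-1` A]setTI; exact: mX. Qed.

Lemma lebesgue_measure_itv0 {R : realType} (s : R) : 0 <= s ->
  lebesgue_measure (`[0, s]%classic : set R) = s%:E.
Proof.
move=> s0; rewrite lebesgue_measure_itv /= lte_fin oppr0 adde0.
by case: ltgtP s0 => // <-.
Qed.

Lemma set_le_preimage {T} {R : realType} (X : T -> R) (s : R) :
  [set x | X x <= s] = X @^-1` `]-oo, s].
Proof. by apply/seteqP; split => x; rewrite /= in_itv. Qed.

Section integral_comp_density.
Local Open Scope ereal_scope.
Context {d d'} {T : measurableType d} {U : measurableType d'} {R : realType}.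
Variables (mu : {measure set T -> \bar R}) (nu : {measure set U -> \bar R}).
Context {X : T -> U} {D : set T} {g : U -> \bar R}.
Hypotheses (mX : measurable_fun setT X) (mD : measurable D).
Hypotheses (g0 : forall y, 0 <= g y) (gfin : forall y, g y \is a fin_num).
Hypothesis mg : measurable_fun setT g.
Hypothesis Xg : forall A : set U, measurable A ->
  mu (X @^-1` A `&` D) = \int[nu]_(y in A) g y.

Import HBNNSimple.

Lemma integral_comp_density_indic A : measurable A ->
  \int[mu]_(x in D) (\1_A (X x))%:E = \int[nu]_y ((\1_A y)%:E * g y).
Proof.
move=> mA; have XgA := Xg _ mA.
rewrite -[LHS]/(\int[mu]_(x in D) (\1_(X @^-1` A) x)%:E).
rewrite integral_indic //; last exact: measurable_preimageT mX mA.
rewrite XgA integral_mkcond.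
by apply: eq_integral => y _; rewrite epatch_indic muleC.
Qed.

Lemma integral_comp_density_nnsfun (h : {nnsfun U >-> R}) :
  \int[mu]_(x in D) (h (X x))%:E = \int[nu]_y ((h y)%:E * g y).
Proof.
pose hr r y := r%:E * (\1_(h @^-1` [set r]) y)%:E.
have hr0 r y : 0 <= hr r y by exact: nnfun_muleindic_ge0.
have mhr r : measurable_fun setT (hr r).
  by apply: emeasurable_funM => //; exact/measurable_EFinP/measurable_indic.
have hE y : (h y)%:E = \sum_(r \in range h) hr r y.
  by rewrite fimfunE -fsumEFin //; apply: eq_fsbigr => r _; rewrite EFinM.
under eq_integral do rewrite hE.
under [RHS]eq_integral do rewrite hE ge0_mule_fsuml //.
rewrite !ge0_integral_fsum //; first last.
- by move=> r; apply: measurable_funTS; exact: measurableT_comp (mhr r) mX.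
- by move=> r y _; rewrite mule_ge0.
- by move=> r; exact: emeasurable_funM.
apply: eq_fsbigr => r; rewrite inE => -[z _ hzr].
have r0 : (0 <= r)%R by rewrite -hzr.
under [RHS]eq_integral do rewrite -muleA.
rewrite ge0_integralZl //; last first.
  exact/measurable_EFinP/measurable_indic/(measurable_preimageT mX).
rewrite ge0_integralZl //; first by rewrite integral_comp_density_indic.
- by apply: emeasurable_funM => //; exact/measurable_EFinP/measurable_indic.
- by move=> y _; rewrite mule_ge0.
Qed.

Lemma ge0_integral_comp_density (h : U -> \bar R) :
    (forall y, 0 <= h y) -> measurable_fun setT h ->
  \int[mu]_(x in D) h (X x) = \int[nu]_y (h y * g y).
Proof.
move=> h0 mh; pose hn := nnsfun_approx measurableT mh.
have hn_cvg y : (hn n y)%:E @[n --> \oo] --> h y.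
  exact: cvg_nnsfun_approx.
have hn_nd y : nondecreasing_seq (fun n => (hn n y)%:E).
  by move=> m n mn; rewrite lee_fin; exact/lefP/nd_nnsfun_approx.
have mhn n : measurable_fun setT (fun y => (hn n y)%:E).
  exact/measurable_EFinP/measurable_funP.
rewrite (eq_integral (fun x => limn (fun n => (hn n (X x))%:E))); last first.
  by move=> x _; apply/esym/cvg_lim => //; exact: hn_cvg.
rewrite [RHS](eq_integral (fun y => limn (fun n => (hn n y)%:E * g y))); last first.
  by move=> y _; apply/esym/cvg_lim => //; apply: cvgeZr => //; exact: hn_cvg.
rewrite !monotone_convergence //.
- by congr (limn _); apply/funext => n; exact: integral_comp_density_nnsfun.
- by move=> n; exact: emeasurable_funM (mhn n) mg.
- by move=> n y _; rewrite mule_ge0 // lee_fin.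
- by move=> y _ m n mn; rewrite lee_wpmul2r //; exact: hn_nd.
- by move=> n; apply: measurable_funTS; exact: measurableT_comp (mhn n) mX.
- by move=> n x _; rewrite lee_fin.
Qed.
End integral_comp_density.

Lemma measurable_inv (R : realType) : measurable_fun setT (@GRing.inv R).
Proof.
have -> : [set: R] = [set 0] `|` ~` [set 0] by rewrite setUv.
apply/measurable_funU => //; first exact: measurableC.
split; first exact: measurable_fun_set1.
apply: open_continuous_measurable_fun.
  exact/closed_openC/accessible_closed_set1/hausdorff_accessible/Rhausdorff.
by move=> x; rewrite inE /= => /eqP x0; exact: inv_continuous.
Qed.

Section weighted_density.
Local Open Scope ereal_scope.
Context {R : realType} {d} {Omega : measurableType d} {Pr : probability Omega R}.
Context {Q : Omega -> R} {f : R -> R} {c : R}.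
Hypotheses (mQ : measurable_fun setT Q) (Q01 : forall x, (0 <= Q x <= 1)%R).
Hypotheses (mf : measurable_fun setT f) (c0 : (0 <= c)%R).
Hypothesis c_le_f : forall q, (0 <= q <= 1)%R -> (c <= f q)%R.

Lemma integral_weight_density (D : set Omega) (k : R -> \bar R) :
    measurable D -> (forall q, 0 <= k q) -> (forall q, k q \is a fin_num) ->
    measurable_fun setT k ->
    (forall A, measurable A -> Pr (Q @^-1` A `&` D) =
       \int[lebesgue_measure]_(q in A `&` `[0%R, 1%R]) ((f q)%:E * k q)) ->
  \int[Pr]_(x in D) (c / f (Q x))%:E =
    c%:E * \int[lebesgue_measure]_(q in `[0%R, 1%R]) k q.
Proof.
move=> mD k0 kfin mk Dk.
have in01 q : q \in `[0%R, 1%R]%classic = (0 <= q <= 1)%R.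
  by rewrite mem_setE /= in_itv.
have f_ge0 q : (0 <= q <= 1)%R -> (0 <= f q)%R.
  by move=> q01; exact: le_trans c0 (c_le_f _ q01).
(* Off [0, 1] nothing controls the sign of f; patching keeps both functions
   nonnegative without changing the integrals, as Q and the density live on [0, 1]. *)
pose h := (fun q => (c / f q)%:E) \_ `[0%R, 1%R].
pose g := (fun q => (f q)%:E * k q) \_ `[0%R, 1%R].
have mh : measurable_fun setT h.
  apply/measurable_restrict => //; apply: measurable_funTS.
  apply/measurable_EFinP/measurable_funM => //.
  exact: measurableT_comp (measurable_inv R) mf.
have mg : measurable_fun setT g.
  apply/measurable_restrict => //; apply: measurable_funTS.
  by apply: emeasurable_funM => //; exact/measurable_EFinP.
have h0 q : 0 <= h q.
  by rewrite /h patchE; case: ifPn => // /[!in01] q01; rewrite lee_fin divr_ge0 ?f_ge0.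
have g0 q : 0 <= g q.
  by rewrite /g patchE; case: ifPn => // /[!in01] q01; rewrite mule_ge0 ?lee_fin ?f_ge0.
have gfin q : g q \is a fin_num.
  by rewrite /g patchE; case: ifPn => // _; rewrite fin_numM.
have Dg A : measurable A ->
    Pr (Q @^-1` A `&` D) = \int[lebesgue_measure]_(q in A) g q.
  by move=> mA; rewrite /g -integral_mkcondr; exact: Dk.
transitivity (\int[Pr]_(x in D) h (Q x)).
  by apply: eq_integral => x _; rewrite /h patchE in01 Q01.
rewrite (ge0_integral_comp_density Pr lebesgue_measure mQ mD g0 gfin mg Dg _ h0 mh).
rewrite -ge0_integralZl //; last exact: measurable_funS mk.
rewrite [RHS]integral_mkcond; apply: eq_integral => q _.
rewrite /h /g !patchE; case: ifPn => [/[!in01] q01|_]; last by rewrite mul0e.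
rewrite muleA -EFinM; congr (_ * _); congr EFin.
have [fq0|fq0] := eqVneq (f q) 0%R; last by rewrite divfK.
have -> : c = 0%R by apply/le_anti; rewrite c0 andbT -fq0 c_le_f.
by rewrite !mul0r.
Qed.
End weighted_density.

Section ell_f.
Context {R : realType} {f : R -> R}.
Hypothesis f_ge0 : forall q, 0 <= q <= 1 -> 0 <= f q.

Let lbound_f01 : lbound [set f q | q in `[0%R, 1%R]] 0.
Proof. by move=> _ [q q01 <-]; apply: f_ge0; move: q01; rewrite /= in_itv. Qed.

Lemma ell_f_ge0 : 0 <= ell_f f.
Proof.
apply: lb_le_inf lbound_f01.
by exists (f 0), 0 => //=; rewrite in_itv /= lexx ler01.
Qed.

Lemma ell_f_le q : 0 <= q <= 1 -> ell_f f <= f q.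
Proof.
move=> q01; apply: ge_inf; first by exists 0; exact: lbound_f01.
by exists q => //=; rewrite in_itv.
Qed.

End ell_f.

Lemma ptilde_density_le_setE (R : realType) d (Omega : measurableType d)
    (T P Q : Omega -> R) (s : R) :
    (forall x, T x = 0 \/ T x = 1) ->
  [set x | ptilde_density T P Q x <= s] =
    ([set x | (P x <= s)%R] `&` [set x | T x = 1]) `|`
    ([set x | (Q x <= s)%R] `\` [set x | T x = 1]).
Proof.
move=> T01; apply/seteqP; split => x /=; rewrite /ptilde_density.
  case: (T01 x) => ->; rewrite ?subr0 ?subrr ?mul0r ?add0r ?addr0 mul1r.
    by move=> Qs; right; split=> // /esym/eqP; rewrite oner_eq0.
  by move=> Ps; left.
case=> [[Ps ->]|[Qs]]; first by rewrite mul1r subrr mul0r addr0.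
by case: (T01 x) => -> //; rewrite mul0r add0r subr0 mul1r.
Qed.

Section ptilde_density_law.
Local Open Scope ereal_scope.
Context {R : realType} {d} {Omega : measurableType d} {Pr : probability Omega R}.
Context {P Q T : Omega -> R} {f : R -> R} {kappa : R.-pker R ~> R} {eta : R}.
Hypotheses (mP : measurable_fun setT P) (mQ : measurable_fun setT Q).
Hypothesis mT : measurable_fun setT T.
Hypothesis Q01 : forall x, (0 <= Q x <= 1)%R.
Hypothesis T01 : forall x, T x = 0%R \/ T x = 1%R.
Hypothesis mf : measurable_fun setT f.
Hypothesis f_ge0 : forall q, (0 <= q <= 1)%R -> (0 <= f q)%R.
Hypothesis Qdens : forall A : set R, measurable A ->
  Pr (Q @^-1` A) = \int[lebesgue_measure]_(q in A `&` `[0%R, 1%R]) (f q)%:E.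
Hypothesis Hcond : forall A B : set R, measurable A -> measurable B ->
  Pr (Q @^-1` A `&` P @^-1` B) =
    \int[lebesgue_measure]_(q in A `&` `[0%R, 1%R]) ((f q)%:E * kappa q B).
Hypothesis eta01 : (0 <= eta <= 1)%R.
Hypothesis HT : forall C : set (R * R)%type, measurable C ->
  Pr ([set x | C (Q x, P x)] `&` [set x | T x = 1%R]) =
    \int[Pr]_(x in [set x | C (Q x, P x)]) (1 - eta * ell_f f / f (Q x))%:E.

Let c := (eta * ell_f f)%R.

Let c0 : (0 <= c)%R.
Proof. by rewrite mulr_ge0 ?(andP eta01).1 ?ell_f_ge0. Qed.

Let c_le_f q : (0 <= q <= 1)%R -> (c <= f q)%R.
Proof.
move=> q01; apply: (le_trans _ (ell_f_le f_ge0 _ q01)).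
by rewrite ler_piMl ?ell_f_ge0 ?(andP eta01).2.
Qed.

Let weight x := (c / f (Q x))%R.

Let weight01 x : (0 <= weight x <= 1)%R.
Proof.
have cf := c_le_f _ (Q01 x); have f0 := le_trans c0 cf.
rewrite /weight divr_ge0 //=.
have [->|fQ0] := eqVneq (f (Q x)) 0%R; first by rewrite invr0 mulr0.
by rewrite ler_pdivrMr ?mul1r // lt_neqAle eq_sym fQ0.
Qed.

Let mweight : measurable_fun setT (fun x => (weight x)%:E).
Proof.
apply/measurable_EFinP/measurable_funM => //.
exact: measurableT_comp (measurable_inv R) (measurableT_comp mf mQ).
Qed.

Let T1 := [set x | T x = 1%R].

Let mT1 : measurable T1.
Proof. exact: measurable_preimageT mT (measurable_set1 1%R). Qed.

Let mQP {C : set (R * R)%type} :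
  measurable C -> measurable [set x | C (Q x, P x)].
Proof. exact: measurable_preimageT (measurable_fun_pair mQ mP). Qed.

Lemma measureI_T1_add_weight C : measurable C ->
  Pr ([set x | C (Q x, P x)] `&` T1) +
    \int[Pr]_(x in [set x | C (Q x, P x)]) (weight x)%:E =
  Pr [set x | C (Q x, P x)].
Proof.
move=> mC; have mE := mQP mC.
rewrite HT // -ge0_integralD //.
- under eq_integral do rewrite -EFinD subrK.
  by rewrite integral_cst // mul1e.
- by move=> x _; rewrite lee_fin subr_ge0 (andP (weight01 x)).2.
- apply: measurable_funTS; apply/measurable_EFinP/measurable_funB => //.
  exact/measurable_EFinP.
- by move=> x _; rewrite lee_fin (andP (weight01 x)).1.
- exact: measurable_funTS.
Qed.

Lemma measureD_T1_weight C : measurable C ->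
  Pr ([set x | C (Q x, P x)] `\` T1) =
    \int[Pr]_(x in [set x | C (Q x, P x)]) (weight x)%:E.
Proof.
move=> mC; set E := [set x | C (Q x, P x)]; have mE : measurable E := mQP mC.
have splitE : Pr E = Pr (E `\` T1) + Pr (E `&` T1) by exact: measureDI.
have finI : Pr (E `&` T1) \is a fin_num by rewrite fin_num_measure //; exact: measurableI.
move: splitE; rewrite -(measureI_T1_add_weight _ mC) -/E addeC.
by move=> /(congr1 (fun z => z - Pr (E `&` T1))); rewrite !addeK.
Qed.

Let P_le_setE s : [set x | (P x <= s)%R] = [set x | (setT `*` `]-oo, s]) (Q x, P x)].
Proof. by apply/seteqP; split => x /=; rewrite in_itv /=; [move=> ?; split | case]. Qed.

Let Q_le_setE s : [set x | (Q x <= s)%R] = [set x | (`]-oo, s] `*` setT) (Q x, P x)].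
Proof. by apply/seteqP; split => x /=; rewrite in_itv /=; [move=> ?; split | case]. Qed.

Let prob_le_fin_num {X : Omega -> R} s : measurable_fun setT X ->
  prob_le Pr X s \is a fin_num.
Proof.
move=> mX; apply: fin_num_measure; rewrite set_le_preimage.
exact: measurable_preimageT mX (measurable_itv _).
Qed.

Let mptilde : measurable_fun setT (ptilde_density T P Q).
Proof.
by apply: measurable_funD; apply: measurable_funM => //; apply: measurable_funB.
Qed.

Lemma prob_ptilde_le_add_weight s :
  prob_le Pr (ptilde_density T P Q) s +
    \int[Pr]_(x in [set x | (P x <= s)%R]) (weight x)%:E =
  prob_le Pr P s + \int[Pr]_(x in [set x | (Q x <= s)%R]) (weight x)%:E.
Proof.
have mPs : measurable (setT `*` `]-oo, s]%classic : set (R * R)%type).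
  by apply: measurableX => //; exact: measurable_itv.
have mQs : measurable (`]-oo, s]%classic `*` setT : set (R * R)%type).
  by apply: measurableX => //; exact: measurable_itv.
rewrite /prob_le ptilde_density_le_setE // P_le_setE Q_le_setE.
set EP := [set x | _ (Q x, P x)]; set EQ := [set x | _ (Q x, P x)].
have -> : Pr ((EP `&` T1) `|` (EQ `\` T1)) = Pr (EP `&` T1) + Pr (EQ `\` T1).
  rewrite measureU //; first exact: measurableI (mQP mPs) mT1.
  - exact: measurableD (mQP mQs) mT1.
  - by apply/seteqP; split => x // [[_ ?] [_ ?]].
rewrite measureD_T1_weight // -(measureI_T1_add_weight _ mPs).
by rewrite addeAC.
Qed.

Lemma integral_weight_Q_le s : (0 <= s <= 1)%R ->
  \int[Pr]_(x in [set x | (Q x <= s)%R]) (weight x)%:E = (c * s)%:E.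
Proof.
move=> /andP[s0 s1]; rewrite set_le_preimage; set B := `]-oo, s]%classic.
have mB : measurable B by exact: measurable_itv.
rewrite (integral_weight_density mQ Q01 mf c0 c_le_f _ (fun q => (\1_B q)%:E)) //.
- rewrite (integral_indic lebesgue_measure (measurable_itv _) mB).
  have -> : B `&` `[0%R, 1%R] = `[0%R, s]%classic :> set R.
    apply/seteqP; split => q; rewrite /B /= !in_itv /=.
      by move=> [-> /andP[->]].
    by move=> /andP[-> qs]; rewrite qs (le_trans qs s1).
  by rewrite EFinM; exact: (congr1 (mule c%:E) (lebesgue_measure_itv0 _ s0)).
- exact: measurable_preimageT mQ mB.
- exact/measurable_EFinP/measurable_indic.
- move=> A mA; rewrite -preimage_setI Qdens; last exact: measurableI.
  rewrite setIAC integral_mkcondr; apply: eq_integral => q _.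
  by rewrite epatch_indic.
Qed.

Lemma integral_weight_P_le s :
  \int[Pr]_(x in [set x | (P x <= s)%R]) (weight x)%:E =
    c%:E * \int[lebesgue_measure]_(q in `[0%R, 1%R]) kappa q `]-oo, s]%classic.
Proof.
rewrite set_le_preimage; set B := `]-oo, s]%classic.
have mB : measurable B by exact: measurable_itv.
rewrite (integral_weight_density mQ Q01 mf c0 c_le_f _ (fun q => kappa q B)) //.
- exact: measurable_preimageT mP mB.
- by move=> q; exact: finite_kernel_measure.
- exact: measurable_kernel.
- by move=> A mA; exact: Hcond.
Qed.

Lemma integral_weight_P_le_indep s : indep_rv Pr P Q ->
  \int[Pr]_(x in [set x | (P x <= s)%R]) (weight x)%:E = c%:E * prob_le Pr P s.
Proof.
move=> PQ; rewrite /prob_le set_le_preimage; set B := `]-oo, s]%classic.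
have mB : measurable B by exact: measurable_itv.
rewrite (integral_weight_density mQ Q01 mf c0 c_le_f _ (cst (Pr (P @^-1` B)))) //.
- rewrite (integral_cst lebesgue_measure (measurable_itv _)).
  transitivity (c%:E * (Pr (P @^-1` B) * 1)); last by rewrite mule1.
  exact: (congr1 (fun z => c%:E * (Pr (P @^-1` B) * z)) (lebesgue_measure_itv0 _ ler01)).
- exact: measurable_preimageT mP mB.
- by move=> q; rewrite fin_num_measure //; exact: measurable_preimageT mP mB.
- move=> A mA; rewrite setIC PQ // Qdens // muleC -ge0_integralZr //.
  + exact: measurableI.
  + by apply/measurable_EFinP; exact: measurable_funS mf.
  + by move=> q [_]; rewrite /= in_itv /= => q01; rewrite lee_fin f_ge0.
Qed.

Lemma eta_ell_f_le1 : (eta * ell_f f <= 1)%R.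
Proof.
have mC : measurable (`]-oo, 1%R]%classic `*` setT : set (R * R)%type).
  by apply: measurableX => //; exact: measurable_itv.
rewrite -lee_fin -/c -[c]mulr1 -integral_weight_Q_le ?ler01 ?lexx // Q_le_setE.
apply: le_trans (probability_le1 Pr (mQP mC)).
by rewrite -(measureI_T1_add_weight _ mC) lee_paddl.
Qed.

Let integral_kappa_fin s :
  \int[lebesgue_measure]_(q in `[0%R, 1%R]) kappa q `]-oo, s]%classic \is a fin_num.
Proof.
rewrite ge0_fin_numE; last exact: integral_ge0.
apply: (@le_lt_trans _ _ (\int[lebesgue_measure]_(q in `[0%R, 1%R]) (cst 1) q)).
  apply: ge0_le_integral => //.
  - exact: measurable_funTS (measurable_kernel kappa _ (measurable_itv _)).
  - by move=> q _; rewrite -(prob_kernel (s := kappa) q); apply: le_measure; rewrite ?inE.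
rewrite (integral_cst lebesgue_measure (measurable_itv _)) mul1e.
rewrite -[X in X < _]/(lebesgue_measure (`[0%R, 1%R]%classic : set R)).
by rewrite lebesgue_measure_itv0 ?ltry.
Qed.

Lemma prob_ptilde_le s : (0 <= s <= 1)%R ->
  prob_le Pr (ptilde_density T P Q) s =
    prob_le Pr P s + (eta * ell_f f)%:E *
      (s%:E - \int[lebesgue_measure]_(q in `[0%R, 1%R]) kappa q `]-oo, s]%classic).
Proof.
move=> s01; have := prob_ptilde_le_add_weight s.
rewrite integral_weight_P_le integral_weight_Q_le //.
rewrite -(fineK (integral_kappa_fin s)) -[prob_le Pr P s](fineK (prob_le_fin_num s mP)).
rewrite -[prob_le Pr _ s](fineK (prob_le_fin_num s mptilde)).
by rewrite -EFinB -!EFinM -!EFinD => -[e]; congr EFin; rewrite /c in e; lra.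
Qed.

Lemma prob_ptilde_le_indep s : indep_rv Pr P Q -> (0 <= s <= 1)%R ->
  prob_le Pr (ptilde_density T P Q) s =
    ((1 - eta * ell_f f) * fine (prob_le Pr P s) + eta * ell_f f * s)%:E.
Proof.
move=> PQ s01; have := prob_ptilde_le_add_weight s.
rewrite integral_weight_P_le_indep // integral_weight_Q_le //.
rewrite -[prob_le Pr P s](fineK (prob_le_fin_num s mP)).
rewrite -[prob_le Pr _ s](fineK (prob_le_fin_num s mptilde)).
by rewrite -!EFinM -!EFinD => -[e]; congr EFin; rewrite /c in e; lra.
Qed.

Lemma ptilde_density_valid : indep_rv Pr P Q -> valid_pvalue Pr P ->
  valid_pvalue Pr (ptilde_density T P Q).
Proof.
move=> PQ Pvalid s s01; rewrite prob_ptilde_le_indep // lee_fin.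
have := Pvalid s s01; rewrite -[prob_le Pr P s](fineK (prob_le_fin_num s mP)) lee_fin.
have := eta_ell_f_le1; have [s0 s1] := andP s01; nra.
Qed.

Lemma ptilde_density_uniform : indep_rv Pr P Q -> uniform01 Pr P ->
  uniform01 Pr (ptilde_density T P Q).
Proof.
by move=> PQ PU s s01; rewrite prob_ptilde_le_indep // PU //=; congr EFin; ring.
Qed.

End ptilde_density_law.

Theorem proposition3 (R : realType) (d : measure_display) (Omega : measurableType d)
  (Pr : probability Omega R) (P Q T : Omega -> R)
  (f : R -> R) (kappa : R.-pker R ~> R) (eta : R)
  (mP : measurable_fun setT P) (mQ : measurable_fun setT Q)
  (mT : measurable_fun setT T)
  (P01 : forall w, 0 <= P w <= 1) (Q01 : forall w, 0 <= Q w <= 1)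
  (T01 : forall w, T w = 0 \/ T w = 1)
  (* H0: P is a valid p-value *)
  (HPvalid : valid_pvalue Pr P)
  (* H0: Q has density f on [0,1] *)
  (mf : measurable_fun setT f)
  (f_ge0 : forall q, 0 <= q <= 1 -> 0 <= f q)
  (Qdens : forall A : set R, measurable A ->
     Pr (Q @^-1` A) = (\int[lebesgue_measure]_(q in A `&` `[0%R, 1%R]) (f q)%:E)%E)
  (* kappa q = conditional law of P given Q = q *)
  (Hcond : forall A B : set R, measurable A -> measurable B ->
     Pr (Q @^-1` A `&` P @^-1` B) =
       (\int[lebesgue_measure]_(q in A `&` `[0%R, 1%R]) ((f q)%:E * kappa q B))%E)
  (eta01 : 0 <= eta <= 1)
  (* conditionally on (Q,P), T ~ Bern(1 - eta * ell_f / f(Q)) *)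
  (HT : forall C : set (R * R)%type, measurable C ->
     Pr ([set w | C (Q w, P w)] `&` [set w | T w = 1]) =
       (\int[Pr]_(w in [set w | C (Q w, P w)])
          (1 - eta * ell_f f / f (Q w))%:E)%E) :
  (forall s : R, 0 <= s <= 1 ->
     prob_le Pr (ptilde_density T P Q) s =
       (prob_le Pr P s + (eta * ell_f f)%:E *
          (s%:E - \int[lebesgue_measure]_(q in `[0%R, 1%R]) kappa q `]-oo, s%R]%classic))%E)
  /\ (indep_rv Pr P Q -> valid_pvalue Pr (ptilde_density T P Q))
  /\ (indep_rv Pr P Q -> uniform01 Pr P -> uniform01 Pr (ptilde_density T P Q)).
Proof.
split; first exact: prob_ptilde_le mP mQ mT Q01 T01 mf f_ge0 Qdens Hcond eta01 HT.
split=> PQ.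
  exact: ptilde_density_valid mP mQ mT Q01 T01 mf f_ge0 Qdens eta01 HT PQ HPvalid.
exact: ptilde_density_uniform mP mQ mT Q01 T01 mf f_ge0 Qdens eta01 HT PQ.
Qed.
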